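(* For every graph $\mathcal{G}$ there exists a scattered, locally quasi-compact topological space $X$, which is neither $\mathbf{T}_1$ nor zero-dimensional, such that $\mathrm{Homeo}(X)$ is isomorphic as a topological group to $\mathrm{Aut}(\mathcal{G})$.
   Context: A graph is a pair $(V,E)$ with $E$ a nonempty set of 2-element subsets of $V$ (simple, non-oriented). $\mathrm{Aut}(\mathcal{G})$ is the subgroup of $\mathrm{Sym}(V)$ preserving $E$, with the topology of pointwise convergence on the discrete set $V$. A space is scattered if every nonempty subset has a point isolated in that subset; locally quasi-compact if each point has a quasi-compact neighbourhood (no separation assumed); $\mathbf{T}_1$ if singletons are closed; zero-dimensional if it has a basis of clopen sets. For scattered $X$, $\mathrm{Homeo}(X)$ carries the topology of pointwise convergence on $X$. *)

From mathcomp Require Import all_boot all_order all_algebra.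
From mathcomp Require Import all_classical all_reals all_analysis.
Set Implicit Arguments. Unset Strict Implicit. Unset Printing Implicit Defensive.
Local Open Scope classical_set_scope.

(* A graph (V,E): E a nonempty set of 2-element subsets of V, encoded as a
   symmetric irreflexive adjacency relation with at least one edge. *)
Definition is_graph (V : Type) (adj : V -> V -> Prop) : Prop :=
  (forall x y, adj x y -> adj y x) /\ (forall x, ~ adj x x) /\
  (exists x y, adj x y).

Definition graph_aut (V : Type) (adj : V -> V -> Prop) : set (V -> V) :=
  [set f | bijective f /\ forall x y, adj x y <-> adj (f x) (f y)].

(* Open subsets of Aut(G) for the topology of pointwise convergence on the
   discrete set V (basic nbhds of g: {h | h = g on a finite F}). *)
Definition aut_open (V : Type) (adj : V -> V -> Prop) (S : set (V -> V)) : Prop :=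
  S `<=` graph_aut adj /\
  forall g, S g -> exists F : set V, finite_set F /\
    forall h, graph_aut adj h -> (forall v, F v -> h v = g v) -> S h.

Definition homeo (X : topologicalType) : set (X -> X) :=
  [set f | continuous f /\ exists g : X -> X,
     continuous g /\ cancel f g /\ cancel g f].
Arguments homeo : clear implicits.

(* Open subsets of Homeo(X) for the topology of pointwise convergence on X:
   basic nbhds of h are {k | k x_i \in U_i, i finite} with U_i open, h x_i \in U_i. *)
Definition homeo_open (X : topologicalType) (S : set (X -> X)) : Prop :=
  S `<=` homeo X /\
  forall h, S h -> exists I : set X, finite_set I /\
    exists U : X -> set X, (forall x, I x -> open (U x) /\ U x (h x)) /\
      forall k, homeo X k -> (forall x, I x -> U x (k x)) -> S k.

Definition scattered (X : topologicalType) : Prop :=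
  forall A : set X, A !=set0 ->
    exists x, A x /\ exists U : set X, open U /\ U `&` A = [set x].

(* quasi-compact = mathcomp's (filter) compactness, no separation assumed *)
Definition locally_quasi_compact (X : topologicalType) : Prop :=
  forall x : X, exists N : set X, nbhs x N /\ compact N.

Definition T1_space (X : topologicalType) : Prop :=
  forall x : X, closed [set x].

Definition zero_dim (X : topologicalType) : Prop :=
  forall (U : set X) (x : X), open U -> U x ->
    exists C : set X, clopen C /\ C x /\ C `<=` U.

Definition topgroup_iso (X : topologicalType) (V : Type) (adj : V -> V -> Prop) : Prop :=
  exists phi : (X -> X) -> (V -> V),
    (forall h, homeo X h -> graph_aut adj (phi h)) /\
    (forall h k, homeo X h -> homeo X k -> phi h = phi k -> h = k) /\
    (forall g, graph_aut adj g -> exists h, homeo X h /\ phi h = g) /\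
    (forall h k, homeo X h -> homeo X k -> phi (h \o k) = phi h \o phi k) /\
    (forall S, aut_open adj S -> homeo_open (X:=X) (homeo X `&` phi @^-1` S)) /\
    (forall S, homeo_open S -> aut_open adj (phi @` S)).

From HB Require Import structures.
From mathcomp Require Import all_boot all_order all_algebra.
From mathcomp Require Import all_classical all_reals all_analysis.
Local Open Scope classical_set_scope.

(* Take for X the incidence poset of the graph (its vertices and edges, a
   vertex lying below the edges containing it) with the Alexandrov topology:
   the open sets are the up-closed sets.  Homeomorphisms are then the order
   automorphisms.  They permute the minimal points, i.e. the vertices, and are
   determined by that permutation since a point is the set of vertices below
   it; the permutation maps edges to edges, so it is a graph automorphism, and
   conversely every graph automorphism acts on X.  As every point contains
   finitely many vertices, pointwise convergence on X is pointwise convergence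
   on the vertices.
   Every nonempty subset of X has a maximal point, which is isolated in it, and
   the up-set of a point is a compact neighbourhood of it.  An edge is an open
   point which is not closed (its vertices lie in its closure), so X is not T1
   and this point has no clopen neighbourhood. *)

Lemma homeo_inverse {X : topologicalType} {h : X -> X} : homeo X h ->
  exists g, [/\ homeo X g, cancel h g & cancel g h].
Proof. by move=> [hc [g [gc [hg gh]]]]; exists g; split => //; split => //; exists h. Qed.

Definition alexandrov {T : choiceType} (le : T -> T -> Prop) : Type := T.

Definition upclosed {T : Type} (le : T -> T -> Prop) (A : set T) : Prop :=
  forall x y, le x y -> A x -> A y.

Lemma upclosedT {T : Type} (le : T -> T -> Prop) : upclosed le setT.
Proof. by []. Qed.

Lemma upclosedI {T : Type} (le : T -> T -> Prop) : setI_closed (upclosed le).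
Proof. by move=> A B hA hB x y xy [/(hA _ _ xy) ? /(hB _ _ xy)]. Qed.

Lemma upclosed_bigcup {T : Type} (le : T -> T -> Prop) (I : Type) (F : I -> set T) :
  (forall i, upclosed le (F i)) -> upclosed le (\bigcup_i F i).
Proof. by move=> hF x y xy [i _ Fix]; exists i => //; exact: hF xy Fix. Qed.

HB.instance Definition _ (T : choiceType) (le : T -> T -> Prop) :=
  Choice.on (alexandrov le).
HB.instance Definition _ (T : choiceType) (le : T -> T -> Prop) :=
  @isOpenTopological.Build (alexandrov le) (upclosed le)
    (upclosedT le) (upclosedI le) (upclosed_bigcup le).

Section Alexandrov.
Context {T : choiceType} (le : T -> T -> Prop).

Local Notation X := (alexandrov le).

Definition upset (x : X) : set X := [set y | le x y].
Definition minimal (x : T) : Prop := forall y, le y x -> y = x.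
Definition maximal (x : T) : Prop := forall y, le x y -> y = x.

Lemma alexandrov_openP {A : set X} : open A <-> upclosed le A.
Proof. by []. Qed.

Lemma nbhs_upset_sub {x : X} {B : set X} : nbhs x B -> upset x `<=` B.
Proof. by move=> [C [oC Cx CB]] y xy; apply: CB; exact: oC xy Cx. Qed.

Lemma monotone_continuous {f : X -> X} :
  (forall x y, le x y -> le (f x) (f y)) -> continuous f.
Proof.
move=> mf; apply/continuousP => A /alexandrov_openP oA.
by apply/alexandrov_openP => x y xy /=; exact: oA (mf _ _ xy).
Qed.

Lemma alexandrov_not_closed1 {x y : X} : le x y -> x <> y -> ~ closed [set y].
Proof.
move=> xy xNy /closed_openC /alexandrov_openP oCy.
exact: oCy x y xy xNy erefl.
Qed.

Lemma alexandrov_not_zero_dim {x y : X} :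
  le x y -> x <> y -> maximal y -> ~ zero_dim X.
Proof.
move=> xy xNy ymax zd.
have oy : open [set y : X] by move=> a b ab /= ay; apply: ymax; rewrite -ay.
have [C [[_ cC] [Cy sC]]] := zd _ y oy erefl.
apply: (alexandrov_not_closed1 xy xNy).
by rewrite (_ : [set y] = C) //; apply/seteqP; split => // z /= ->.
Qed.

Hypotheses (le_refl : forall x, le x x)
           (le_trans : forall x y z, le x y -> le y z -> le x z).

Lemma open_upset (x : X) : open (upset x).
Proof. by move=> a b ab /= xa; exact: le_trans ab. Qed.

Lemma nbhs_upset (x : X) : nbhs x (upset x).
Proof. by apply: open_nbhs_nbhs; split; [exact: open_upset | exact: le_refl]. Qed.

Lemma compact_upset (x : X) : compact (upset x).
Proof.
move=> F FF Fx; exists x; split; first exact: le_refl.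
move=> A B FA /nbhs_upset_sub xB.
have [z [Az xz]] := filter_ex (filterI FA Fx).
by exists z; split => //; apply: xB.
Qed.

Lemma alexandrov_lqc : locally_quasi_compact X.
Proof. by move=> x; exists (upset x); split; [exact: nbhs_upset | exact: compact_upset]. Qed.

Lemma alexandrov_scattered :
  (forall A : set T, A !=set0 ->
     exists2 x, A x & forall y, A y -> le x y -> y = x) ->
  scattered X.
Proof.
move=> has_max A /has_max [x Ax xmax]; exists x; split => //.
exists (upset x); split; first exact: open_upset.
apply/seteqP; split => [y [xy Ay]|y /= ->]; first exact: xmax.
by split; first exact: le_refl.
Qed.

Lemma continuous_monotone {f : X -> X} :
  continuous f -> forall x y, le x y -> le (f x) (f y).
Proof.
move/continuousP => cf x y xy.
have /alexandrov_openP up_fx := cf _ (open_upset (f x)).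
exact: up_fx x y xy (le_refl (f x)).
Qed.

Lemma homeo_minimal {h : X -> X} {x : X} : homeo X h -> minimal x -> minimal (h x).
Proof.
move=> hh xmin y yhx; have [g [[gc _] hgK ghK]] := homeo_inverse hh.
have := continuous_monotone gc _ _ yhx; rewrite hgK => /xmin gyx.
by rewrite -gyx ghK.
Qed.

End Alexandrov.

Definition vertex_or_edge {V : Type} (adj : V -> V -> Prop) (S : set V) : Prop :=
  (exists v, S = [set v]) \/ (exists a b, adj a b /\ S = [set a; b]).

Definition incidence {V : Type} (adj : V -> V -> Prop) : Type :=
  {S : set V | vertex_or_edge adj S}.

HB.instance Definition _ V adj := gen_eqMixin (@incidence V adj).
HB.instance Definition _ V adj := gen_choiceMixin (@incidence V adj).

Definition incl {V : Type} {adj : V -> V -> Prop} (p q : incidence adj) : Prop :=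
  sval p `<=` sval q.

Definition incidence_space {V : Type} (adj : V -> V -> Prop) : Type :=
  alexandrov (@incl V adj).

Section IncidenceSpace.
Context {V : Type} (adj : V -> V -> Prop).

Local Notation P := (incidence adj).
Local Notation X := (incidence_space adj).

Lemma incl_refl (p : P) : incl p p. Proof. exact: subset_refl. Qed.

Lemma incl_trans (p q r : P) : incl p q -> incl q r -> incl p r.
Proof. exact: subset_trans. Qed.

Lemma incidence_eq {p q : P} : sval p = sval q -> p = q.
Proof. by case: p q => [S pS] [S' pS'] /= e; exact: eq_exist. Qed.

Definition vertex (v : V) : P := exist _ [set v] (or_introl (ex_intro _ v erefl)).

Definition edge {a b : V} (ab : adj a b) : P :=
  exist _ [set a; b] (or_intror (ex_intro _ a (ex_intro _ b (conj ab erefl)))).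

Lemma vertex_inj : injective vertex.
Proof. by move=> v w /(congr1 sval) /= vw; have : [set w] v by rewrite -vw. Qed.

Lemma incl_vertexl {v : V} {p : P} : incl (vertex v) p <-> sval p v.
Proof. by split => [/(_ v erefl) | pv w /= ->]. Qed.

Lemma incl_vertexr {p : P} {v : V} : incl p (vertex v) -> p = vertex v.
Proof.
move=> sub; apply: incidence_eq; move: sub; rewrite /incl.
case: (proj2_sig p) => [[c ->]|[c [d [_ ->]]]] sub; first by rewrite (sub c erefl).
by rewrite (sub c (or_introl erefl)) (sub d (or_intror erefl)) setUid.
Qed.

Lemma incidence_nonempty (p : P) : sval p !=set0.
Proof. by case: (proj2_sig p) => [[c ->]|[c [d [_ ->]]]]; exists c => //; left. Qed.

Lemma incidence_finite (p : P) : finite_set (sval p).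
Proof.
case: (proj2_sig p) => [[c ->]|[c [d [_ ->]]]]; first exact: finite_set1.
by rewrite finite_setU; split; exact: finite_set1.
Qed.

Definition vertex_of (p : P) : V := projT1 (cid (incidence_nonempty p)).

Lemma vertex_ofP (p : P) : sval p (vertex_of p).
Proof. exact: projT2 (cid (incidence_nonempty p)). Qed.

Lemma vertex_ofK (v : V) : vertex_of (vertex v) = v.
Proof. exact: vertex_ofP (vertex v). Qed.

Lemma vertex_minimal (v : V) : minimal incl (vertex v).
Proof. by move=> p /incl_vertexr. Qed.

Lemma minimal_vertex {p : P} : minimal incl p -> p = vertex (vertex_of p).
Proof. by move=> pmin; symmetry; apply/pmin/incl_vertexl/vertex_ofP. Qed.

Lemma homeo_incl {h : X -> X} {p q : P} : homeo X h -> incl p q -> incl (h p) (h q).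
Proof. by move=> [hc _]; apply: (continuous_monotone _ incl_refl incl_trans hc). Qed.

Definition vertex_map (h : X -> X) (v : V) : V := vertex_of (h (vertex v)).

Lemma vertex_mapE {h : X -> X} {v w : V} :
  h (vertex v) = vertex w -> vertex_map h v = w.
Proof. by rewrite /vertex_map => ->; exact: vertex_ofK. Qed.

Lemma homeo_vertex {h : X -> X} (v : V) :
  homeo X h -> h (vertex v) = vertex (vertex_map h v).
Proof.
move=> hh; apply: minimal_vertex.
apply: (homeo_minimal _ incl_refl incl_trans hh); exact: vertex_minimal.
Qed.

Lemma vertex_map_comp {h k : X -> X} : homeo X h -> homeo X k ->
  vertex_map (h \o k) = vertex_map h \o vertex_map k.
Proof.
by move=> hh hk; apply: funext => v; apply: vertex_mapE; rewrite /= !homeo_vertex.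
Qed.

Lemma vertex_map_cancel {h g : X -> X} : homeo X h -> homeo X g ->
  cancel h g -> cancel (vertex_map h) (vertex_map g).
Proof. by move=> hh hg hgK v; apply: vertex_inj; rewrite -!homeo_vertex. Qed.

Lemma homeo_image {h : X -> X} (p : P) :
  homeo X h -> sval (h p) = vertex_map h @` sval p.
Proof.
move=> hh; have [g [hg hgK ghK]] := homeo_inverse hh.
apply/seteqP; split => [w /incl_vertexl hpw | _ [u pu <-]].
  exists (vertex_map g w); last exact: vertex_map_cancel hg hh ghK w.
  by apply/incl_vertexl; rewrite -homeo_vertex // -(hgK p); exact: homeo_incl.
by apply/incl_vertexl; rewrite -homeo_vertex //; apply: homeo_incl => //; exact/incl_vertexl.
Qed.

Lemma vertex_map_inj {h k : X -> X} : homeo X h -> homeo X k ->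
  vertex_map h = vertex_map k -> h = k.
Proof.
move=> hh hk hk_eq; apply: funext => p; apply: incidence_eq.
by rewrite !homeo_image // hk_eq.
Qed.

Definition incidence_image (f : V -> V) (p : P) : P :=
  if pselect (vertex_or_edge adj (f @` sval p)) is left fp then exist _ _ fp else p.

Lemma incidence_imageE {f : V -> V} (p : P) :
  (forall x y, adj x y -> adj (f x) (f y)) ->
  sval (incidence_image f p) = f @` sval p.
Proof.
move=> f_adj; rewrite /incidence_image; case: pselect => [//|[]].
case: (proj2_sig p) => [[a ->]|[a [b [ab ->]]]].
  by left; exists (f a); rewrite image_set1.
by right; exists (f a), (f b); split; [exact: f_adj | rewrite image_setU !image_set1].
Qed.

Lemma vertex_map_image {f : V -> V} :
  (forall x y, adj x y -> adj (f x) (f y)) -> vertex_map (incidence_image f) = f.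
Proof.
move=> f_adj; apply: funext => v; apply: vertex_mapE; apply: incidence_eq.
by rewrite incidence_imageE // image_set1.
Qed.

Lemma graph_aut_adj {f : V -> V} : graph_aut adj f ->
  forall x y, adj x y -> adj (f x) (f y).
Proof. by move=> [_ f_adj] x y /f_adj. Qed.

Lemma aut_homeo {f : V -> V} : graph_aut adj f -> homeo X (incidence_image f).
Proof.
move=> af; have fadj := graph_aut_adj af; have [[g fK gK] f_adj] := af.
have gadj x y : adj x y -> adj (g x) (g y) by move=> xy; apply/f_adj; rewrite !gK.
have mono k : (forall x y, adj x y -> adj (k x) (k y)) -> continuous (incidence_image k : X -> X).
  move=> k_adj; apply: monotone_continuous => p q pq.
  by rewrite /incl !incidence_imageE //; exact: image_subset.
split; first exact: mono.
exists (incidence_image g); split; first exact: mono.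
split => p; apply: incidence_eq; rewrite !incidence_imageE // image_comp.
  by rewrite (funext fK : g \o f = id) image_id.
by rewrite (funext gK : f \o g = id) image_id.
Qed.

Hypotheses (adj_sym : forall a b, adj a b -> adj b a)
           (adj_irrefl : forall a, ~ adj a a).

Lemma adj_neq {a b : V} : adj a b -> a <> b.
Proof. by move=> + ab_eq; rewrite ab_eq; exact: adj_irrefl. Qed.

Lemma incidence_pair {p : P} {a b : V} : a <> b -> sval p a -> sval p b ->
  adj a b /\ sval p = [set a; b].
Proof.
case: (proj2_sig p) => [[c ->]|[c [d [cd ->]]]] aNb.
  by move=> ac bc; case: aNb; rewrite ac bc.
case=> ac [] bc; rewrite /set1 /= in ac bc; subst a b; try by [exfalso; exact: aNb | split].
by split; [exact: adj_sym | rewrite setUC].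
Qed.

Lemma edge_maximal {a b : V} (ab : adj a b) : maximal incl (edge ab).
Proof.
move=> q sub; apply: incidence_eq.
by case: (incidence_pair (adj_neq ab) (sub a (or_introl erefl)) (sub b (or_intror erefl))).
Qed.

Lemma vertex_or_maximal (p : P) : (exists v, p = vertex v) \/ maximal incl p.
Proof.
case: (proj2_sig p) => [[c pc]|[c [d [cd pcd]]]]; first by left; exists c; exact: incidence_eq.
by right; rewrite (_ : p = edge cd); [exact: edge_maximal | exact: incidence_eq].
Qed.

Lemma incidence_has_maximal (A : set P) : A !=set0 ->
  exists2 p, A p & forall q, A q -> incl p q -> q = p.
Proof.
move=> [p0 Ap0].
have [[p Ap pmax]|nomax] := pselect (exists2 p, A p & maximal incl p).
  by exists p => // q _ /pmax.
exists p0 => // q Aq p0q; have [[v qv]|qmax] := vertex_or_maximal q.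
  by move: p0q; rewrite qv => /incl_vertexr.
by case: nomax; exists q.
Qed.

Lemma homeo_adj {h : X -> X} {x y : V} : homeo X h ->
  adj x y -> adj (vertex_map h x) (vertex_map h y).
Proof.
move=> hh xy; have [g [hg hgK _]] := homeo_inverse hh.
have hxNhy : vertex_map h x <> vertex_map h y.
  by move/(congr1 (vertex_map g)); rewrite !(vertex_map_cancel hh hg hgK); exact: adj_neq.
apply: (proj1 (incidence_pair (p := h (edge xy)) hxNhy _ _)); rewrite homeo_image //.
  by exists x => //; left.
by exists y => //; right.
Qed.

Lemma vertex_map_aut {h : X -> X} : homeo X h -> graph_aut adj (vertex_map h).
Proof.
move=> hh; have [g [hg hgK ghK]] := homeo_inverse hh.
split; first by exists (vertex_map g); exact: vertex_map_cancel.
move=> x y; split; first exact: homeo_adj.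
by move/(homeo_adj hg); rewrite !(vertex_map_cancel hh hg hgK).
Qed.

Lemma vertex_map_preimage_open (S : set (V -> V)) :
  aut_open adj S -> homeo_open (homeo X `&` vertex_map @^-1` S).
Proof.
move=> [_ S_open]; split; first by move=> h [].
move=> h [hh Sh]; have [F [finF hF]] := S_open _ Sh.
exists (vertex @` F); split; first exact: finite_image.
exists (fun p => upset incl (h p)); split.
  by move=> p _; split; [exact: open_upset incl_trans (h p) | exact: incl_refl].
move=> k hk kF; split => //=; apply: hF; first exact: vertex_map_aut.
move=> v Fv; have := kF (vertex v) (ex_intro2 _ _ v Fv erefl).
by rewrite /upset /= !homeo_vertex // => /incl_vertexr /vertex_inj.
Qed.

Lemma vertex_map_image_open (S : set (X -> X)) :
  homeo_open S -> aut_open adj (vertex_map @` S).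
Proof.
move=> [S_homeo S_open].
split; first by move=> _ [h Sh <-]; exact/vertex_map_aut/S_homeo.
move=> _ [h Sh <-]; have hh := S_homeo _ Sh.
have [I [finI [U [hU hS]]]] := S_open _ Sh.
exists (\bigcup_(p in I) sval p); split.
  by apply: bigcup_finite => // p _; exact: incidence_finite.
move=> f af agree; exists (incidence_image f); last exact: vertex_map_image (graph_aut_adj af).
apply: hS; first exact: aut_homeo.
move=> p Ip; rewrite (_ : incidence_image f p = h p); first exact: (hU p Ip).2.
apply: incidence_eq; rewrite incidence_imageE ?homeo_image //; last exact: graph_aut_adj.
by apply: eq_imagel => v pv; apply: agree; exists p.
Qed.

Lemma incidence_topgroup_iso : topgroup_iso X adj.
Proof.
exists vertex_map; split; first by move=> h; exact: vertex_map_aut.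
split; first by move=> h k; exact: vertex_map_inj.
split.
  move=> f af; exists (incidence_image f); split; first exact: aut_homeo.
  exact/vertex_map_image/graph_aut_adj.
split; first by move=> h k; exact: vertex_map_comp.
by split; [exact: vertex_map_preimage_open | exact: vertex_map_image_open].
Qed.

End IncidenceSpace.

Theorem proposition24 (V : Type) (adj : V -> V -> Prop) :
  is_graph adj ->
  exists X : topologicalType,
    scattered X /\ locally_quasi_compact X /\
    ~ T1_space X /\ ~ zero_dim X /\
    topgroup_iso X adj.
Proof.
move=> [adj_sym [adj_irrefl [a [b ab]]]].
have a_ab : incl (vertex adj a) (edge adj ab) by move=> x /= ->; left.
have aNab : vertex adj a <> edge adj ab.
  move/(congr1 sval) => /= a_eq; apply: (adj_neq adj adj_irrefl ab).
  by have : [set a] b by rewrite a_eq; right.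
exists (incidence_space adj); split.
  apply: (alexandrov_scattered _ (incl_refl adj) (incl_trans adj)).
  exact: incidence_has_maximal adj adj_sym adj_irrefl.
split; first exact: (alexandrov_lqc _ (incl_refl adj) (incl_trans adj)).
split; first by move/(_ (edge adj ab)); exact: alexandrov_not_closed1 a_ab aNab.
split; last exact: incidence_topgroup_iso adj adj_sym adj_irrefl.
exact: alexandrov_not_zero_dim a_ab aNab (edge_maximal adj adj_sym adj_irrefl ab).
Qed.
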